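(* Let $I\subset\mathbb{N}^{d}$ be a finite nonempty set of multi-indices which is closed under the componentwise minimum, i.e. $i,j\in I$ implies $i\wedge j\in I$ where $(i\wedge j)_k=\min\{i_k,j_k\}$. Then the general coefficient problem for $I$ has exactly one solution, and it is given by hierarchical coefficients $w_i=1$ for all $i\in I{\downarrow}$. That is: there exists a unique family of real coefficients $(c_i)_{i\in I}$ with $\sum_{j\in I,\,j\ge i}c_j=1$ for every $i\in I{\downarrow}$, and this family is the unique maximiser of the general coefficient problem for $I$.
   Context: For multi-indices $i,j\in\mathbb{N}^d$, $i\le j$ means $i_k\le j_k$ for all $k=1,\dots,d$, and $\|i\|_1=\sum_k i_k$. For a finite $I\subset\mathbb{N}^d$, $I{\downarrow}:=\{i\in\mathbb{N}^d:\exists j\in I\text{ with } i\le j\}$. Given real coefficients $(c_i)_{i\in I}$, their hierarchical coefficients are $w_i:=\sum_{j\in I,\ j\ge i}c_j$ for $i\in I{\downarrow}$. The general coefficient problem (GCP) for $I$ is: among all families $(c_i)_{i\in I}$ of reals whose hierarchical coefficients satisfy $w_i\in\{0,1\}$ for every $i\in I{\downarrow}$, maximise $Q'(w):=\sum_{i\in I{\downarrow}}4^{-\|i\|_1}w_i$. (Equivalently, extending $c_i:=0$ for $i\in I{\downarrow}\setminus I$, $w=Mc$ with $M$ the $0/1$ matrix $M_{ij}=[j\ge i]$ on $I{\downarrow}$, and the GCP is a maximisation over binary $w$ on $I{\downarrow}$ subject to $(M^{-1}w)_i=0$ for $i\in I{\downarrow}\setminus I$.) A solution of the GCP is a maximising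 family $(c_i)_{i\in I}$. *)

From HB Require Import structures.
From mathcomp Require Import all_boot all_order all_algebra.
Set Implicit Arguments. Unset Strict Implicit. Unset Printing Implicit Defensive.
Import Order.TTheory GRing.Theory Num.Theory.

Definition mi (d : nat) := {ffun 'I_d -> nat}.

Definition mle d (i j : mi d) : bool := [forall k, i k <= j k].

Definition mmeet d (i j : mi d) : mi d := [ffun k => minn (i k) (j k)].

Definition norm1 d (i : mi d) : nat := \sum_(k < d) i k.

Definition in_down d (I : seq (mi d)) (i : mi d) : bool := has (mle i) I.

Definition box d (j : mi d) : seq (mi d) :=
  [seq g <- [seq [ffun k => nat_of_ord (fun_of_fin f k)] | f : {ffun 'I_d -> 'I_(\max_(k < d) j k).+1} <- enum {ffun 'I_d -> 'I_(\max_(k < d) j k).+1}]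
     | mle g j].

Definition downI d (I : seq (mi d)) : seq (mi d) := undup (flatten (map (@box d) I)).

Lemma downI_uniq d (I : seq (mi d)) : uniq (downI I).
Proof. exact: undup_uniq. Qed.

Lemma mem_downI d (I : seq (mi d)) i : (i \in downI I) = in_down I i.
Proof.
rewrite /downI mem_undup /in_down; apply/flattenP/hasP.
  case=> s /mapP [j jI ->]; rewrite /box mem_filter => /andP [lij _].
  by exists j.
move=> [j jI lij]; exists (box j); first by apply/mapP; exists j.
rewrite /box mem_filter lij /=; apply/mapP.
have lt k : i k < (\max_(k0 < d) j k0).+1.
  rewrite ltnS; apply: leq_trans (forallP lij k) _.
  by apply: (leq_bigmax_cond (F := fun k0 : 'I_d => j k0)).
exists [ffun k => Ordinal (lt k)]; first by rewrite mem_enum.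
by apply/ffunP => k; rewrite !ffunE.
Qed.

Local Open Scope ring_scope.

Definition hier (R : realFieldType) d (I : seq (mi d)) (c : mi d -> R) (i : mi d) : R :=
  \sum_(j <- I | mle i j) c j.

Definition Qobj (R : realFieldType) d (I : seq (mi d)) (w : mi d -> R) : R :=
  \sum_(i <- downI I) (4%:R ^-1) ^+ norm1 i * w i.

Definition gcp_feasible (R : realFieldType) d (I : seq (mi d)) (c : mi d -> R) : Prop :=
  forall i, in_down I i -> (hier I c i == 0) || (hier I c i == 1).

From HB Require Import structures.
From mathcomp Require Import all_boot all_order all_algebra.
Import Order.TTheory GRing.Theory Num.Theory.
Local Open Scope ring_scope.
Set Implicit Arguments. Unset Strict Implicit.

(* On a finite poset the system [\sum_(j >= i) c j = 1] (i in I) is triangular,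
   so it has exactly one solution, the Moebius inversion of the constant 1, built
   by recursion on the number of elements strictly above [i].  When I is closed under meets, the elements of I above
   any [i] in the down-closure are exactly those above their meet [m], which
   lies in I; hence all hierarchical coefficients of this solution equal 1.
   Every feasible family has hierarchical coefficients in {0, 1}, so its
   objective, a positively weighted sum of them, is at most the one of the
   all-ones family, with equality only when all of them equal 1. *)

Lemma count_lt_subpred (T : eqType) (P Q : pred T) (s : seq T) x :
  subpred P Q -> x \in s -> Q x -> ~~ P x -> (count P s < count Q s)%N.
Proof.
move=> PQ; elim: s => [//|y s IH]; rewrite in_cons /= => /orP [/eqP <-|xs] Qx nPx.
  by rewrite Qx (negbTE nPx) add0n add1n ltnS; apply: sub_count.
have := IH xs Qx nPx; case Py: (P y); first by rewrite (PQ _ Py) add1n ltnS.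
by move=> lt_PQ; apply: leq_trans lt_PQ _; rewrite leq_addl.
Qed.

Lemma eq_sum_pmulr1 (R : numDomainType) (T : eqType) (s : seq T) (a w : T -> R) :
  (forall x, 0 < a x) -> (forall x, x \in s -> w x <= 1) ->
  \sum_(x <- s) a x * w x = \sum_(x <- s) a x -> {in s, forall x, w x = 1}.
Proof.
move=> a_gt0 w_le1 eq_sum x xs.
have : \sum_(y <- s) a y * (1 - w y) == 0.
  by rewrite (eq_bigr _ (fun y _ => mulrBr _ _ _)) sumrB big_seq_cond
    (eq_bigr _ (fun y _ => mulr1 (a y))) -big_seq_cond eq_sum subrr.
rewrite big_seq psumr_eq0 => [/allP/(_ x xs)|y ys]; last first.
  by rewrite mulr_ge0 ?subr_ge0 ?w_le1 // ltW.
by rewrite xs mulf_eq0 gt_eqF //= subr_eq0 => /eqP.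
Qed.

Section MobiusOne.
Variables (R : pzRingType) (T : eqType) (le : rel T) (s : seq T).
Hypotheses (le_refl : reflexive le) (le_trans : transitive le)
  (le_anti : antisymmetric le) (s_uniq : uniq s).

Definition strictly_above (i j : T) : bool := le i j && (j != i).

Definition height (i : T) : nat := count (strictly_above i) s.

Lemma height_lt i j : j \in s -> strictly_above i j -> (height j < height i)%N.
Proof.
move=> js /andP [le_ij ne_ji]; apply: (count_lt_subpred (x := j)) => //.
- move=> k /andP [le_jk ne_kj]; rewrite /strictly_above (le_trans le_ij le_jk).
  apply: contra_neq ne_ji => eq_ki; apply: le_anti.
  by rewrite le_ij andbT -eq_ki.
- by rewrite /strictly_above le_ij.
- by rewrite /strictly_above eqxx andbF.
Qed.

Fixpoint mobius_one_rec (n : nat) (i : T) : R :=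
  if n is n'.+1 then 1 - \sum_(j <- s | strictly_above i j) mobius_one_rec n' j
  else 0.

(* The fuel exceeds every height, beyond which it is irrelevant (mobius_one_recE). *)
Definition mobius_one (i : T) : R := mobius_one_rec (size s).+1 i.

Lemma mobius_one_recE n m i : (height i < n)%N -> (height i < m)%N ->
  mobius_one_rec n i = mobius_one_rec m i.
Proof.
elim: n m i => [//|n IH] [//|m] i lt_in lt_im /=; congr (1 - _).
rewrite big_seq_cond [RHS]big_seq_cond; apply: eq_bigr => j /andP [js ij].
by apply: IH; apply: leq_trans (height_lt js ij) _.
Qed.

Lemma mobius_oneE i :
  mobius_one i = 1 - \sum_(j <- s | strictly_above i j) mobius_one j.
Proof.
rewrite [LHS]/mobius_one [LHS]/=; congr (1 - _).
rewrite big_seq_cond [RHS]big_seq_cond; apply: eq_bigr => j /andP [js ij].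
have lt_js : (height j < size s)%N := leq_trans (height_lt js ij) (count_size _ _).
by apply: mobius_one_recE => //; apply: ltnW.
Qed.

Lemma sum_above_split (c : T -> R) i : i \in s ->
  \sum_(j <- s | le i j) c j = c i + \sum_(j <- s | strictly_above i j) c j.
Proof.
move=> is_i; rewrite -big_filter (bigD1_seq i) ?filter_uniq //.
  by rewrite big_filter_cond.
by rewrite mem_filter le_refl.
Qed.

Lemma sum_above_mobius_one i : i \in s -> \sum_(j <- s | le i j) mobius_one j = 1.
Proof. by move=> is_i; rewrite sum_above_split // [mobius_one i]mobius_oneE subrK. Qed.

Lemma sum_above_one_unique (c : T -> R) :
  (forall i, i \in s -> \sum_(j <- s | le i j) c j = 1) -> {in s, c =1 mobius_one}.
Proof.
move=> c_sum i is_i; have [n] := ubnP (height i).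
elim: n i is_i => [//|n IH] i is_i lt_in.
have := c_sum i is_i; rewrite sum_above_split // [mobius_one i]mobius_oneE => <-.
suff -> : \sum_(j <- s | strictly_above i j) mobius_one j =
          \sum_(j <- s | strictly_above i j) c j by rewrite addrK.
rewrite big_seq_cond [RHS]big_seq_cond; apply: eq_bigr => j /andP [js ij].
by rewrite IH // (leq_trans (height_lt js ij) lt_in).
Qed.

End MobiusOne.

Section MultiIndexOrder.
Variable d : nat.
Implicit Types i j k : mi d.

Lemma mle_refl : reflexive (@mle d).
Proof. by move=> i; apply/forallP. Qed.

Lemma mle_trans : transitive (@mle d).
Proof.
move=> j i k /forallP le_ij /forallP le_jk; apply/forallP => x.
exact: leq_trans (le_ij x) (le_jk x).
Qed.

Lemma mle_anti : antisymmetric (@mle d).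
Proof.
move=> i j /andP [/forallP le_ij /forallP le_ji]; apply/ffunP => x.
by apply/eqP; rewrite eqn_leq le_ij le_ji.
Qed.

Lemma mle_meetl i j : mle (mmeet i j) i.
Proof. by apply/forallP => x; rewrite ffunE geq_minl. Qed.

Lemma mle_meetr i j : mle (mmeet i j) j.
Proof. by apply/forallP => x; rewrite ffunE geq_minr. Qed.

Lemma mle_meet k i j : mle k i -> mle k j -> mle k (mmeet i j).
Proof.
move=> /forallP le_ki /forallP le_kj; apply/forallP => x.
by rewrite ffunE leq_min le_ki le_kj.
Qed.

Variable I : seq (mi d).
Hypothesis I_meet : forall i j, i \in I -> j \in I -> mmeet i j \in I.

Lemma meet_closed_glb i x s : x \in I -> {subset s <= I} -> all (mle i) (x :: s) ->
  exists2 m, m \in I & mle i m && all (mle m) (x :: s).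
Proof.
elim: s x => [|y s IH] x xI sI /=.
  by rewrite andbT => le_ix; exists x; rewrite // le_ix mle_refl.
move=> /and3P [le_ix le_iy le_is].
have yI : y \in I by apply: sI; rewrite mem_head.
have sI' : {subset s <= I} by move=> z zs; apply: sI; rewrite inE zs orbT.
have le_ixys : all (mle i) (mmeet x y :: s) by rewrite /= mle_meet.
have [m mI /andP [le_im /= /andP [le_mxy le_ms]]] := IH _ (I_meet xI yI) sI' le_ixys.
exists m; rewrite // le_im le_ms (mle_trans le_mxy (mle_meetl _ _)).
by rewrite (mle_trans le_mxy (mle_meetr _ _)).
Qed.

Lemma in_down_glb i : in_down I i ->
  exists2 m, m \in I & forall j, j \in I -> mle i j = mle m j.
Proof.
move=> /hasP [x xI le_ix].
have sI : {subset [seq j <- I | mle i j] <= I} by move=> j; rewrite mem_filter => /andP [].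
have le_is : all (mle i) (x :: [seq j <- I | mle i j]) by rewrite /= le_ix filter_all.
have [m mI /andP [le_im /allP le_m]] := meet_closed_glb xI sI le_is.
exists m => // j jI; apply/idP/idP => [le_ij|]; last exact: mle_trans.
by apply: le_m; rewrite inE mem_filter le_ij jI orbT.
Qed.

End MultiIndexOrder.

Section GeneralCoefficientProblem.
Variables (R : realFieldType) (d : nat) (I : seq (mi d)).

Lemma in_down_mem i : i \in I -> in_down I i.
Proof. by move=> iI; apply/hasP; exists i => //; apply: mle_refl. Qed.

Lemma hier_le1 (c : mi d -> R) i :
  gcp_feasible I c -> in_down I i -> hier I c i <= 1.
Proof. by move=> c_feas /c_feas /orP [] /eqP ->; rewrite ?ler01. Qed.

Lemma Qobj_le_ones (w : mi d -> R) : (forall i, in_down I i -> w i <= 1) ->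
  Qobj I w <= \sum_(i <- downI I) (4%:R ^-1 : R) ^+ norm1 i.
Proof.
move=> w_le1; rewrite /Qobj big_seq [X in _ <= X]big_seq.
apply: ler_sum => i; rewrite mem_downI => /w_le1 wi_le1.
by rewrite ler_piMr ?exprn_ge0 ?invr_ge0.
Qed.

Hypotheses (I_uniq : uniq I) (I_meet : forall i j, i \in I -> j \in I -> mmeet i j \in I).

Definition gcp_solution : mi d -> R := mobius_one R (@mle d) I.

Lemma hier_ones_unique (c : mi d -> R) :
  (forall i, in_down I i -> hier I c i = 1) -> {in I, c =1 gcp_solution}.
Proof.
move=> c_ones; apply: (sum_above_one_unique (@mle_refl d) (@mle_trans d) (@mle_anti d) I_uniq).
by move=> i /in_down_mem /c_ones.
Qed.

Lemma hier_gcp_solution i : in_down I i -> hier I gcp_solution i = 1.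
Proof.
move=> /(in_down_glb I_meet) [m mI same_above].
rewrite -[RHS](sum_above_mobius_one R (@mle_refl d) (@mle_trans d) (@mle_anti d) I_uniq mI).
rewrite /hier big_seq_cond [RHS]big_seq_cond; apply: eq_bigl => j.
by case: (boolP (j \in I)) => //= jI; rewrite same_above.
Qed.

Lemma Qobj_gcp_solution :
  Qobj I (hier I gcp_solution) = \sum_(i <- downI I) (4%:R ^-1 : R) ^+ norm1 i.
Proof.
rewrite /Qobj big_seq [RHS]big_seq; apply: eq_bigr => i.
by rewrite mem_downI => /hier_gcp_solution ->; rewrite mulr1.
Qed.

End GeneralCoefficientProblem.

Theorem mainTheorem2 (R : realFieldType) (d : nat) (I : seq (mi d)) :
  I != [::] -> uniq I ->
  (forall i j, i \in I -> j \in I -> mmeet i j \in I) ->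
  exists c : mi d -> R,
    [/\ forall i, in_down I i -> hier I c i = 1,
        forall c' : mi d -> R, (forall i, in_down I i -> hier I c' i = 1) ->
          {in I, c' =1 c},
        gcp_feasible I c,
        forall c' : mi d -> R, gcp_feasible I c' -> Qobj I (hier I c') <= Qobj I (hier I c)
      & forall c' : mi d -> R, gcp_feasible I c' ->
          Qobj I (hier I c') = Qobj I (hier I c) -> {in I, c' =1 c}].
Proof.
move=> _ I_uniq I_meet; set c := gcp_solution R I.
have c_ones := hier_gcp_solution R I_uniq I_meet.
have Qc := Qobj_gcp_solution R I_uniq I_meet.
exists c; split=> [|c'|i /c_ones ->|c' c'_feas|c' c'_feas] //.
- exact: hier_ones_unique.
- by rewrite eqxx orbT.
- by rewrite Qc; apply: Qobj_le_ones => i; apply: hier_le1.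
rewrite Qc => Q_eq; apply: hier_ones_unique => // i.
rewrite -mem_downI; apply: (eq_sum_pmulr1 _ _ Q_eq) => [j|j].
- by rewrite exprn_gt0 // invr_gt0 ltr0n.
- by rewrite mem_downI; apply: hier_le1.
Qed.
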